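(* In the setting of the context, for each $A\ge1$ there exists $s_{03}(A)>1$ such that for all $s_0\ge s_{03}(A)$, writing $\psi=\psi_{s_0,d_0,d_1}$ (decomposed at time $s=s_0$): (i) there exists a rectangle $\mathcal D_{s_0}\subset[-2,2]^2$ such that the linear map $\Phi:(d_0,d_1)\mapsto(\psi_0,\psi_1)$ is one-to-one from $\mathcal D_{s_0}$ onto $\left[-\frac{A}{s_0^{2\beta+1}},\frac{A}{s_0^{2\beta+1}}\right]^2$, maps $\partial\mathcal D_{s_0}$ into $\partial\left(\left[-\frac{A}{s_0^{2\beta+1}},\frac{A}{s_0^{2\beta+1}}\right]^2\right)$, and has degree one on the boundary; (ii) for all $(d_0,d_1)\in\mathcal D_{s_0}$: $\psi_e\equiv0$, $|\psi_-(y)|<\frac1{s_0^\gamma}(1+|y|^3)$ for all $y\in\mathbb{R}$, $|\psi_0|\le\frac{A}{s_0^{2\beta+1}}$, $|\psi_1|\le\frac{A}{s_0^{2\beta+1}}$, $|\psi_2|<\frac1{s_0^{4\beta-1}}$ (in particular $\psi\in\vartheta_A(s_0)$); (iii) for all $(d_0,d_1)\in\mathcal D_{s_0}$: $\|\partial_y\psi\|_{L^\infty(\mathbb{R})}\le\frac{CA}{s_0^{2\beta+1}}\le\frac1{s_0^{\gamma-3\beta}}$ and $|\partial_y\psi_-(y)|\le\frac1{s_0^\gamma}(1+|y|^3)$ for all $y\in\mathbb{R}$, where $C>0$ depends only on $p,\mu,K$.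
   Context: Let $p>3$, $\mu>0$, $q=\frac{2p}{p+1}$, $\beta=\frac{p+1}{2(p-1)}$. Let $\rho(y)=e^{-y^2/4}/\sqrt{4\pi}$, $h_0=1,h_1=y,h_2=y^2-2$, $k_m=h_m/\int_{\mathbb{R}}h_m^2\rho$. Fix $\chi_0\in C^\infty([0,\infty),[0,1])$ nonincreasing, $\chi_0=1$ on $[0,1]$, support in $[0,2]$, a fixed constant $K\ge6$ (large, depending only on $p,\mu$), and $\chi(y,s)=\chi_0(|y|/(Ks^\beta))$. For $r\in L^\infty(\mathbb{R})$ and time $s$: $r_b=\chi(\cdot,s)r$, $r_e=(1-\chi(\cdot,s))r$, $r_m=\int r_bk_m\rho$ ($m=0,1,2$), $r_-=r_b-\sum_{m=0}^2r_mh_m$. Fix $\gamma$ with $3\beta<\gamma<\min(5\beta-1,2\beta+1)$. For $A\ge1$, $s\ge1$, $\vartheta_A(s)$ is the set of $r\in L^\infty(\mathbb{R})$ with $\|r_e\|_{L^\infty}\le A^2s^{-(\gamma-3\beta)}$, $\|r_-(y)/(1+|y|^3)\|_{L^\infty}\le As^{-\gamma}$, $|r_0|,|r_1|\le As^{-(2\beta+1)}$, $|r_2|\le\sqrt As^{-(4\beta-1)}$. For $A\ge1$, $s_0>1$, $d_0,d_1\in\mathbb{R}$: $\psi_{s_0,d_0,d_1}(y)=\frac{A}{s_0^{2\beta+1}}(d_0+d_1y)\chi(2y,s_0)$. *)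

From Stdlib Require Import Reals.
From Coquelicot Require Import Coquelicot.
Open Scope R_scope.

Definition beta (p : R) : R := (p + 1) / (2 * (p - 1)).

Definition rho (y : R) : R := exp (- (y ^ 2) / 4) / sqrt (4 * PI).

Definition integral_R (f : R -> R) : R :=
  RInt_gen f (Rbar_locally m_infty) (Rbar_locally p_infty).

(* Hermite-type polynomials h_0 = 1, h_1 = y, h_2 = y^2 - 2 (h_m = 0 for m > 2, unused) *)
Definition h (m : nat) (y : R) : R :=
  match m with
  | 0%nat => 1
  | 1%nat => y
  | 2%nat => y ^ 2 - 2
  | _ => 0
  end.

Definition k (m : nat) (y : R) : R :=
  h m y / integral_R (fun z => (h m z) ^ 2 * rho z).

Definition chi (chi0 : R -> R) (K p : R) (y s : R) : R :=
  chi0 (Rabs y / (K * Rpower s (beta p))).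

Definition r_b chi0 K p (s : R) (r : R -> R) (y : R) : R := chi chi0 K p y s * r y.
Definition r_e chi0 K p (s : R) (r : R -> R) (y : R) : R := (1 - chi chi0 K p y s) * r y.
Definition r_mode chi0 K p (s : R) (r : R -> R) (m : nat) : R :=
  integral_R (fun y => r_b chi0 K p s r y * k m y * rho y).
Definition r_minus chi0 K p (s : R) (r : R -> R) (y : R) : R :=
  r_b chi0 K p s r y
  - (r_mode chi0 K p s r 0 * h 0 y + r_mode chi0 K p s r 1 * h 1 y
     + r_mode chi0 K p s r 2 * h 2 y).

(* The shrinking set vartheta_A(s); L^infty norms written as pointwise sup bounds. *)
Definition in_vartheta chi0 K p (gamma A s : R) (r : R -> R) : Prop :=
  (forall y, Rabs (r_e chi0 K p s r y) <= A ^ 2 * Rpower s (- (gamma - 3 * beta p))) /\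
  (forall y, Rabs (r_minus chi0 K p s r y) / (1 + Rabs y ^ 3) <= A * Rpower s (- gamma)) /\
  Rabs (r_mode chi0 K p s r 0) <= A * Rpower s (- (2 * beta p + 1)) /\
  Rabs (r_mode chi0 K p s r 1) <= A * Rpower s (- (2 * beta p + 1)) /\
  Rabs (r_mode chi0 K p s r 2) <= sqrt A * Rpower s (- (4 * beta p - 1)).

Definition psi chi0 K p (A s0 d0 d1 : R) (y : R) : R :=
  A / Rpower s0 (2 * beta p + 1) * (d0 + d1 * y) * chi chi0 K p (2 * y) s0.

Definition Phi chi0 K p (A s0 : R) (d : R * R) : R * R :=
  (r_mode chi0 K p s0 (psi chi0 K p A s0 (fst d) (snd d)) 0,
   r_mode chi0 K p s0 (psi chi0 K p A s0 (fst d) (snd d)) 1).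

Definition in_rect (a0 b0 a1 b1 : R) (d : R * R) : Prop :=
  a0 <= fst d <= b0 /\ a1 <= snd d <= b1.
Definition on_rect_boundary (a0 b0 a1 b1 : R) (d : R * R) : Prop :=
  in_rect a0 b0 a1 b1 d /\
  (fst d = a0 \/ fst d = b0 \/ snd d = a1 \/ snd d = b1).

(* Degree of the linear map Phi on the boundary: for a linear bijection between
   rectangles mapping boundary to boundary, the degree is the sign of its
   determinant; "degree one" = positive determinant. *)
Definition linear2_det (F : R * R -> R * R) : R :=
  fst (F (1, 0)) * snd (F (0, 1)) - fst (F (0, 1)) * snd (F (1, 0)).

From Stdlib Require Import Reals Lra Lia Psatz FunctionalExtensionality Classical_Prop.
From Coquelicot Require Import Coquelicot.
Open Scope R_scope.

(* The datum [psi] lives where the cut-off [chi(., s0)] equals one, so [psi_b = psi] and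
   [psi_e = 0], and its modes are integrals over [[-L, L]], [L = K s0^beta].  By parity
   [psi_0] only sees [d0] and [psi_1] only sees [d1]: [Phi] is the diagonal map
   [(d0, d1) |-> (M alpha_0 d0, M alpha_1 d1)] with [M = A / s0^(2 beta + 1)], and since the
   truncated Gaussian moments [alpha_m] tend to 1 as [L] grows, [alpha_m > 1/2] for large
   [s0]; the rectangle is [[-1/alpha_0, 1/alpha_0] x [-1/alpha_1, 1/alpha_1]].  Thanks to the
   Gaussian decay of [rho], everything else ([psi_2], [psi_-] and the derivatives) is at
   most [M] times a constant depending only on [chi0], and [M s0^gamma -> 0] because
   [gamma < 2 beta + 1]. *)

Lemma exp_ge_cube x : 0 <= x -> (1 + x / 3) ^ 3 <= exp x.
Proof.
  intros Hx.
  replace x with (x / 3 + x / 3 + x / 3) at 2 by field.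
  rewrite !exp_plus.
  pose proof (exp_ineq1_le (x / 3)) as He.
  assert (0 <= (1 + x / 3) * (1 + x / 3)) by nra.
  assert ((1 + x / 3) * (1 + x / 3) <= exp (x / 3) * exp (x / 3)) by nra.
  simpl; nra.
Qed.

Lemma rho_pos y : 0 < rho y.
Proof.
  apply Rdiv_lt_0_compat; [apply exp_pos|].
  apply sqrt_lt_R0; pose proof PI_RGT_0; lra.
Qed.

Lemma rho_even y : rho (- y) = rho y.
Proof. unfold rho; do 3 f_equal; ring. Qed.

Lemma rho_continuous y : continuous rho y.
Proof.
  apply (@ex_derive_continuous R_AbsRing R_NormedModule).
  unfold rho; auto_derive; auto.
Qed.

Lemma rho_decay y : (1 + y ^ 2) ^ 3 * rho y <= 1728.
Proof.
  assert (Hsq : 1 <= sqrt (4 * PI)).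
  { rewrite <- sqrt_1; apply sqrt_le_1_alt; pose proof PI_4; pose proof PI2_3_2; lra. }
  assert (Hrho : rho y <= exp (- (y ^ 2) / 4)).
  { unfold rho, Rdiv. pose proof (exp_pos (- (y ^ 2) / 4)).
    rewrite <- (Rmult_1_r (exp _)) at 2.
    apply Rmult_le_compat_l; [lra|].
    rewrite <- Rinv_1; apply Rinv_le_contravar; lra. }
  assert (Hexp : (1 + y ^ 2 / 4 / 3) ^ 3 <= exp (y ^ 2 / 4)) by (apply exp_ge_cube; nra).
  replace (- (y ^ 2) / 4) with (- (y ^ 2 / 4)) in Hrho by field.
  rewrite exp_Ropp in Hrho.
  (* [1728 = 12^3]: compare [1 + y^2] with [12 (1 + y^2/12)]. *)
  assert (Hpoly : (1 + y ^ 2) ^ 3 <= 1728 * (1 + y ^ 2 / 4 / 3) ^ 3).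
  { replace (1728 * (1 + y ^ 2 / 4 / 3) ^ 3) with ((12 * (1 + y ^ 2 / 4 / 3)) ^ 3) by ring.
    apply pow_incr; split; nra. }
  pose proof (exp_pos (y ^ 2 / 4)). pose proof (rho_pos y).
  assert (Hinv : rho y * exp (y ^ 2 / 4) <= 1).
  { apply (Rmult_le_compat_r (exp (y ^ 2 / 4))) in Hrho; [|lra].
    rewrite Rinv_l in Hrho; lra. }
  assert (0 <= (1 + y ^ 2) ^ 3) by (apply pow_le; nra).
  nra.
Qed.

Lemma Rabs_mul_rho_le u c y :
  Rabs u <= c * (1 + y ^ 2) ^ 2 -> Rabs (u * rho y) <= 1728 * c / (1 + y ^ 2).
Proof.
  intros Hu. pose proof (rho_pos y). pose proof (rho_decay y).
  assert (Hy : 1 <= 1 + y ^ 2) by nra.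
  assert (Hy2 : 0 < (1 + y ^ 2) ^ 2) by (apply pow_lt; lra).
  assert (Hc : 0 <= c).
  { apply (Rmult_le_reg_r ((1 + y ^ 2) ^ 2)); [lra|]. pose proof (Rabs_pos u); lra. }
  rewrite Rabs_mult, (Rabs_right (rho y)) by lra.
  apply (Rmult_le_reg_r (1 + y ^ 2)); [lra|].
  replace (1728 * c / (1 + y ^ 2) * (1 + y ^ 2)) with (c * 1728) by (field; lra).
  apply Rle_trans with (c * ((1 + y ^ 2) ^ 3 * rho y)); [|apply Rmult_le_compat_l; lra].
  replace (c * ((1 + y ^ 2) ^ 3 * rho y)) with (c * (1 + y ^ 2) ^ 2 * rho y * (1 + y ^ 2)) by ring.
  apply Rmult_le_compat_r; [lra|]. apply Rmult_le_compat_r; lra.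
Qed.

Lemma le_one_plus_abs_cube y : 1 <= 1 + Rabs y ^ 3 /\ Rabs y <= 1 + Rabs y ^ 3 /\
  y ^ 2 <= 1 + Rabs y ^ 3.
Proof.
  pose proof (Rabs_pos y) as Hy.
  replace (y ^ 2) with (Rabs y ^ 2) by (rewrite RPow_abs; apply Rabs_right, Rle_ge, pow2_ge_0).
  set (t := Rabs y) in *; simpl.
  assert (0 <= t * t) by nra. assert (0 <= t * (t * t)) by nra.
  destruct (Rle_or_lt t 1); repeat split; nra.
Qed.

Lemma quadratic_remainder_bound M E u q0 q1 q2 y : 0 <= M -> 0 <= E ->
  Rabs u <= M * (2 + 2 * Rabs y) -> Rabs q0 <= M -> Rabs q1 <= M -> Rabs q2 <= M * E ->
  Rabs (u - (q0 + q1 * y + q2 * (y ^ 2 - 2))) <= M * (6 + 3 * E) * (1 + Rabs y ^ 3).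
Proof.
  intros HM HE Hu H0 H1 H2. destruct (le_one_plus_abs_cube y) as (T1 & Ty & Ty2).
  set (T := 1 + Rabs y ^ 3) in *.
  assert (Hq1 : Rabs (q1 * y) <= M * T).
  { rewrite Rabs_mult; apply Rmult_le_compat; try apply Rabs_pos; lra. }
  assert (Hq2 : Rabs (q2 * (y ^ 2 - 2)) <= M * E * (3 * T)).
  { rewrite Rabs_mult; apply Rmult_le_compat; try apply Rabs_pos; [lra|].
    apply Rabs_le; pose proof (pow2_ge_0 y); split; lra. }
  assert (Hsum : Rabs (u - (q0 + q1 * y + q2 * (y ^ 2 - 2)))
                 <= Rabs u + Rabs q0 + Rabs (q1 * y) + Rabs (q2 * (y ^ 2 - 2))).
  { eapply Rle_trans; [apply (Rabs_triang u (- (q0 + q1 * y + q2 * (y ^ 2 - 2))))|].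
    rewrite Rabs_Ropp. pose proof (Rabs_triang (q0 + q1 * y) (q2 * (y ^ 2 - 2))).
    pose proof (Rabs_triang q0 (q1 * y)). lra. }
  assert (M * (2 + 2 * Rabs y) <= M * (4 * T)) by (apply Rmult_le_compat_l; lra).
  assert (M <= M * T) by (rewrite <- (Rmult_1_r M) at 1; apply Rmult_le_compat_l; lra).
  nra.
Qed.

Lemma linear_remainder_bound M E C v q1 q2 y : 0 <= M -> 0 <= E -> 0 <= C ->
  Rabs v <= M * C -> Rabs q1 <= M -> Rabs q2 <= M * E ->
  Rabs (v - (q1 + q2 * (2 * y))) <= M * (C + 1 + 2 * E) * (1 + Rabs y ^ 3).
Proof.
  intros HM HE HC Hv H1 H2. destruct (le_one_plus_abs_cube y) as (T1 & Ty & _).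
  set (T := 1 + Rabs y ^ 3) in *.
  assert (Hq2 : Rabs (q2 * (2 * y)) <= M * E * (2 * T)).
  { rewrite Rabs_mult, Rabs_mult, (Rabs_right 2) by lra.
    pose proof (Rabs_pos y); apply Rmult_le_compat; try apply Rabs_pos; lra. }
  assert (Hsum : Rabs (v - (q1 + q2 * (2 * y))) <= Rabs v + Rabs q1 + Rabs (q2 * (2 * y))).
  { eapply Rle_trans; [apply (Rabs_triang v (- (q1 + q2 * (2 * y))))|].
    rewrite Rabs_Ropp. pose proof (Rabs_triang q1 (q2 * (2 * y))). lra. }
  assert (M * C <= M * C * T) by (rewrite <- (Rmult_1_r (M * C)) at 1; apply Rmult_le_compat_l; nra).
  assert (M <= M * T) by (rewrite <- (Rmult_1_r M) at 1; apply Rmult_le_compat_l; lra).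
  nra.
Qed.

Lemma ex_RInt_cont (f : R -> R) a b : (forall y, continuous f y) -> ex_RInt f a b.
Proof. intros Hf. apply (@ex_RInt_continuous R_CompleteNormedModule); auto. Qed.

Lemma RInt_lin_comb (f g : R -> R) a b u v : ex_RInt f a b -> ex_RInt g a b ->
  RInt (fun y => u * f y + v * g y) a b = u * RInt f a b + v * RInt g a b.
Proof.
  intros Hf Hg. apply is_RInt_unique.
  apply (is_RInt_plus (fun y => u * f y) (fun y => v * g y)).
  - apply (is_RInt_scal f a b u), (@RInt_correct R_CompleteNormedModule), Hf.
  - apply (is_RInt_scal g a b v), (@RInt_correct R_CompleteNormedModule), Hg.
Qed.

Lemma continuous_lin_comb (f g : R -> R) u v y : continuous f y -> continuous g y ->
  continuous (fun y => u * f y + v * g y) y.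
Proof.
  intros Hf Hg.
  apply (@continuous_plus R_UniformSpace R_AbsRing R_NormedModule (fun y => u * f y) (fun y => v * g y));
    [exact (@continuous_scal_r R_UniformSpace R_AbsRing R_NormedModule u f y Hf)
    | exact (@continuous_scal_r R_UniformSpace R_AbsRing R_NormedModule v g y Hg)].
Qed.

Lemma abs_RInt_le_cauchy (f : R -> R) c a b : a <= b -> (forall y, continuous f y) ->
  (forall y, Rabs (f y) <= c / (1 + y ^ 2)) -> Rabs (RInt f a b) <= c * PI.
Proof.
  intros Hab Hf Hbd.
  assert (Hatan : is_RInt (fun y => c / (1 + y ^ 2)) a b (c * (atan b - atan a))).
  { apply (is_RInt_ext (fun y => scal c (/ (1 + y ^ 2)))); [reflexivity|].
    apply (is_RInt_scal (fun y => / (1 + y ^ 2)) a b c (atan b - atan a)).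
    apply (is_RInt_derive atan).
    - intros x _; apply is_derive_Reals, derivable_pt_lim_atan.
    - intros x _; apply (@ex_derive_continuous R_AbsRing R_NormedModule); auto_derive; nra. }
  assert (Hc : 0 <= c).
  { specialize (Hbd 0). pose proof (Rabs_pos (f 0)). replace (1 + 0 ^ 2) with 1 in Hbd by ring. lra. }
  eapply Rle_trans; [apply abs_RInt_le; [lra | apply ex_RInt_cont; auto]|].
  eapply Rle_trans; [apply (RInt_le _ (fun y => c / (1 + y ^ 2)));
    [lra | | eexists; exact Hatan | intros; apply Hbd]|].
  - apply ex_RInt_cont; intros; apply (continuous_comp f Rabs); [apply Hf | apply continuous_Rabs].
  - rewrite (is_RInt_unique _ _ _ _ Hatan).
    pose proof (atan_bound a); pose proof (atan_bound b). apply Rmult_le_compat_l; lra.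
Qed.

Lemma RInt_nonneg_le_wider (f : R -> R) a' a b b' : (forall y, continuous f y) ->
  (forall y, 0 <= f y) -> a' <= a -> a <= b -> b <= b' -> RInt f a b <= RInt f a' b'.
Proof.
  intros Hf Hpos H1 H2 H3.
  rewrite <- (RInt_Chasles f a' a b') by (apply ex_RInt_cont; auto).
  rewrite <- (RInt_Chasles f a b b') by (apply ex_RInt_cont; auto).
  assert (0 <= RInt f a' a) by (apply RInt_ge_0; auto; apply ex_RInt_cont; auto).
  assert (0 <= RInt f b b') by (apply RInt_ge_0; auto; apply ex_RInt_cont; auto).
  simpl; unfold plus; simpl; lra.
Qed.

Lemma is_RInt_gen_of_sym_sup (f : R -> R) l : (forall y, continuous f y) ->
  (forall y, 0 <= f y) -> (forall b, 0 <= b -> RInt f (- b) b <= l) ->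
  (forall eps, 0 < eps -> exists N, forall b, N <= b -> l - eps < RInt f (- b) b) ->
  is_RInt_gen f (Rbar_locally m_infty) (Rbar_locally p_infty) l.
Proof.
  intros Hf Hpos Hub Happ P [eps HP].
  destruct (Happ eps (cond_pos eps)) as [N HN].
  pose proof (Rmax_l N 0); pose proof (Rmax_r N 0).
  set (N' := Rmax N 0) in *.
  apply (Filter_prod _ _ _ (fun x => x < - N') (fun y => N' < y));
    [exists (- N'); auto | exists N'; auto|].
  intros x y Hx Hy; cbv beta in Hx, Hy. exists (RInt f x y). split.
  - apply (@RInt_correct R_CompleteNormedModule), ex_RInt_cont; auto.
  - apply HP. change (Rabs (RInt f x y - l) < eps).
    pose proof (Rmax_l (- x) y); pose proof (Rmax_r (- x) y).
    set (B := Rmax (- x) y) in *.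
    assert (RInt f x y <= RInt f (- B) B) by (apply RInt_nonneg_le_wider; auto; lra).
    assert (RInt f (- N') N' <= RInt f x y) by (apply RInt_nonneg_le_wider; auto; lra).
    assert (RInt f (- B) B <= l) by (apply Hub; lra).
    specialize (HN N' ltac:(assumption)).
    apply Rabs_def1; lra.
Qed.

Lemma integral_R_nonneg_bounded (f : R -> R) c : (forall y, continuous f y) ->
  (forall y, 0 <= f y) -> (forall a b, a <= b -> RInt f a b <= c) ->
  (forall b, 0 <= b -> RInt f (- b) b <= integral_R f) /\
  (forall eps, 0 < eps -> exists N, forall b, N <= b -> integral_R f - eps < RInt f (- b) b).
Proof.
  intros Hf Hpos Hc.
  (* The improper integral is the supremum of the symmetric truncations. *)
  set (E := fun x => exists b, 0 <= b /\ x = RInt f (- b) b).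
  destruct (completeness E) as [l [Hub Hlub]].
  { exists c; intros x [b [Hb ->]]; apply Hc; lra. }
  { exists (RInt f (- 0) 0), 0; split; [lra | reflexivity]. }
  assert (Hle : forall b, 0 <= b -> RInt f (- b) b <= l) by (intros b Hb; apply Hub; exists b; auto).
  assert (Happ : forall eps, 0 < eps -> exists N, forall b, N <= b -> l - eps < RInt f (- b) b).
  { intros eps Heps. apply NNPP; intros Hn.
    enough (l <= l - eps) by lra.
    apply Hlub; intros x [b [Hb ->]].
    apply Rnot_lt_le; intros Hlt; apply Hn.
    exists b; intros b' Hb'.
    eapply Rlt_le_trans; [exact Hlt | apply RInt_nonneg_le_wider; auto; lra]. }
  replace (integral_R f) with l; [split; auto|].
  symmetry; unfold integral_R; apply is_RInt_gen_unique, is_RInt_gen_of_sym_sup; auto.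
Qed.

Lemma integral_R_compact (g : R -> R) L : 0 < L -> (forall y, continuous g y) ->
  (forall y, L < Rabs y -> g y = 0) -> integral_R g = RInt g (- L) L.
Proof.
  intros HL Hg Hz. unfold integral_R; apply is_RInt_gen_unique. intros P HP.
  apply (Filter_prod _ _ _ (fun x => x < - L) (fun y => L < y));
    [exists (- L); auto | exists L; auto|].
  intros x y Hx Hy; cbv beta in Hx, Hy. exists (RInt g (- L) L). split; [|apply locally_singleton; auto].
  assert (Hzero : forall u v, u <= v -> (forall t, u < t < v -> L < Rabs t) -> RInt g u v = 0).
  { intros u v Huv Hout. rewrite (RInt_ext g (fun _ => 0)); [rewrite RInt_const; apply Rmult_0_r|].
    intros t Ht; rewrite Rmin_left, Rmax_right in Ht by lra. apply Hz, Hout; lra. }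
  replace (RInt g (- L) L) with (RInt g x y).
  - apply (@RInt_correct R_CompleteNormedModule), ex_RInt_cont; auto.
  - rewrite <- (RInt_Chasles g x (- L) y), <- (RInt_Chasles g (- L) L y) by (apply ex_RInt_cont; auto).
    rewrite (Hzero x (- L)), (Hzero L y); [unfold plus; simpl; ring | lra | | lra |].
    + intros t Ht; rewrite Rabs_right; lra.
    + intros t Ht; rewrite Rabs_left; lra.
Qed.

Lemma RInt_sym_odd (g : R -> R) L : (forall y, continuous g y) ->
  (forall y, g (- y) = - g y) -> RInt g (- L) L = 0.
Proof.
  intros Hg Hodd.
  assert (H : is_RInt g (- - L) (- L) (RInt g L (- L))).
  { rewrite Ropp_involutive; apply (@RInt_correct R_CompleteNormedModule), ex_RInt_cont; auto. }
  apply is_RInt_comp_opp, (@is_RInt_unique R_CompleteNormedModule) in H.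
  rewrite (RInt_ext _ g) in H by (intros x _; unfold opp; simpl; rewrite Hodd; ring).
  rewrite <- (opp_RInt_swap g (- L) L) in H by (apply ex_RInt_cont; auto).
  unfold opp in H; simpl in H; lra.
Qed.

Lemma scale_interval_iff c b M d : 0 < c -> c * b = M -> (- b <= d <= b <-> - M <= c * d <= M).
Proof. intros Hc E; split; intros [H1 H2]; split; nra. Qed.

Lemma diagonal_map_rect_onto_square (F : R * R -> R * R) M a0 a1 r : 0 < M -> 0 < r ->
  1 <= r * a0 -> 1 <= r * a1 -> (forall d, F d = (M * a0 * fst d, M * a1 * snd d)) ->
  - r <= - / a0 <= / a0 /\ / a0 <= r /\ - r <= - / a1 <= / a1 /\ / a1 <= r /\
  (forall d, in_rect (- / a0) (/ a0) (- / a1) (/ a1) d -> in_rect (- M) M (- M) M (F d)) /\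
  (forall x, in_rect (- M) M (- M) M x ->
     exists d, in_rect (- / a0) (/ a0) (- / a1) (/ a1) d /\ F d = x) /\
  (forall d d', in_rect (- / a0) (/ a0) (- / a1) (/ a1) d ->
     in_rect (- / a0) (/ a0) (- / a1) (/ a1) d' -> F d = F d' -> d = d') /\
  (forall d, on_rect_boundary (- / a0) (/ a0) (- / a1) (/ a1) d ->
     on_rect_boundary (- M) M (- M) M (F d)) /\
  0 < linear2_det F.
Proof.
  intros HM Hr Ha0 Ha1 HF.
  assert (H0 : 0 < a0) by nra. assert (H1 : 0 < a1) by nra.
  assert (E0 : M * a0 * / a0 = M) by (field; lra).
  assert (E1 : M * a1 * / a1 = M) by (field; lra).
  assert (Hb0 : 0 < / a0 <= r).
  { split; [apply Rinv_0_lt_compat, H0|]. apply (Rmult_le_reg_l a0); [exact H0|].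
    rewrite Rinv_r; lra. }
  assert (Hb1 : 0 < / a1 <= r).
  { split; [apply Rinv_0_lt_compat, H1|]. apply (Rmult_le_reg_l a1); [exact H1|].
    rewrite Rinv_r; lra. }
  assert (Hc0 : 0 < M * a0) by nra. assert (Hc1 : 0 < M * a1) by nra.
  assert (Himg : forall d, in_rect (- / a0) (/ a0) (- / a1) (/ a1) d -> in_rect (- M) M (- M) M (F d)).
  { intros d [Hd0 Hd1]; rewrite HF; split; simpl;
      [apply (scale_interval_iff _ (/ a0)) | apply (scale_interval_iff _ (/ a1))]; assumption. }
  split; [split; lra|]. split; [lra|]. split; [split; lra|]. split; [lra|].
  split; [exact Himg|]. split; [|split; [|split]].
  - intros [x0 x1] [Hx0 Hx1]; simpl in Hx0, Hx1.
    assert (Ex0 : M * a0 * (x0 / (M * a0)) = x0) by (field; lra).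
    assert (Ex1 : M * a1 * (x1 / (M * a1)) = x1) by (field; lra).
    exists (x0 / (M * a0), x1 / (M * a1)). rewrite HF; simpl; rewrite Ex0, Ex1.
    split; [|reflexivity].
    split; simpl; [apply (scale_interval_iff (M * a0) _ M) | apply (scale_interval_iff (M * a1) _ M)];
      [assumption | assumption | rewrite Ex0; assumption | assumption | assumption | rewrite Ex1; assumption].
  - intros [d0 d1] [e0 e1] _ _ Heq. rewrite !HF in Heq; simpl in Heq. injection Heq as E0' E1'.
    f_equal; [apply (Rmult_eq_reg_l (M * a0)) | apply (Rmult_eq_reg_l (M * a1))]; lra.
  - intros [d0 d1] [Hin Hside]; split; [apply Himg, Hin|].
    rewrite HF; simpl in *.
    destruct Hside as [-> | [-> | [-> | ->]]];
      [left | right; left | right; right; left | right; right; right]; lra.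
  - unfold linear2_det; rewrite !HF; simpl. nra.
Qed.

Lemma Rpower_eventually_gt X e : 0 < e -> Rbar_locally p_infty (fun s => X < Rpower s e).
Proof.
  intros He. exists (Rpower (Rabs X + 1) (/ e)). intros s Hs.
  assert (Hpos : 0 < Rpower (Rabs X + 1) (/ e)) by apply exp_pos.
  apply Rlt_le_trans with (Rpower (Rpower (Rabs X + 1) (/ e)) e).
  - rewrite Rpower_mult, Rinv_l, Rpower_1 by (pose proof (Rabs_pos X); lra).
    pose proof (Rle_abs X); lra.
  - left; apply Rlt_Rpower_l; lra.
Qed.

Lemma p_infty_witness (P : R -> Prop) : Rbar_locally p_infty P ->
  exists s03, 1 < s03 /\ forall s, s03 <= s -> P s.
Proof.
  intros [N HN]. exists (Rmax N 1 + 1).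
  pose proof (Rmax_l N 1); pose proof (Rmax_r N 1).
  split; [lra|]. intros s Hs; apply HN; lra.
Qed.

Lemma div_Rpower_mul_lt A X a g s : A * X < Rpower s (a - g) ->
  A / Rpower s a * X < Rpower s (- g).
Proof.
  intros H. assert (Ha : 0 < Rpower s a) by apply exp_pos.
  replace (Rpower s (a - g)) with (Rpower s a * Rpower s (- g)) in H
    by (rewrite <- Rpower_plus; f_equal; ring).
  apply (Rmult_lt_reg_l (Rpower s a)); [exact Ha|].
  replace (Rpower s a * (A / Rpower s a * X)) with (A * X) by (field; lra). exact H.
Qed.

Definition hermite_norm (m : nat) : R := integral_R (fun z => h m z ^ 2 * rho z).

Lemma h_continuous m y : continuous (h m) y.
Proof.
  apply (@ex_derive_continuous R_AbsRing R_NormedModule).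
  destruct m as [|[|[|m]]]; unfold h; auto_derive; auto.
Qed.

Lemma h_parity m y : h m (- y) = (-1) ^ m * h m y.
Proof. destruct m as [|[|[|m]]]; simpl; ring. Qed.

Lemma pow_mul_h_diag m y : (m <= 1)%nat -> y ^ m * h m y = h m y ^ 2.
Proof. intros Hm; destruct m as [|[|m]]; [simpl; ring | simpl; ring | lia]. Qed.

Lemma hermite_sq_rho_bound m y : (m <= 1)%nat ->
  0 <= h m y ^ 2 * rho y <= 1728 / (1 + y ^ 2).
Proof.
  intros Hm. pose proof (rho_pos y). split; [apply Rmult_le_pos; [apply pow2_ge_0 | lra]|].
  replace (1728 / (1 + y ^ 2)) with (1728 * 1 / (1 + y ^ 2)) by (rewrite Rmult_1_r; reflexivity).
  eapply Rle_trans; [apply Rle_abs | apply Rabs_mul_rho_le].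
  rewrite Rabs_right by (apply Rle_ge, pow2_ge_0).
  destruct m as [|[|m]]; [| |lia]; simpl; nra.
Qed.

Lemma hermite_sq_rho_continuous m y : continuous (fun z => h m z ^ 2 * rho z) y.
Proof.
  apply (@ex_derive_continuous R_AbsRing R_NormedModule).
  destruct m as [|[|[|m]]]; unfold h, rho; auto_derive; auto.
Qed.

Lemma hermite_norm_approx m : (m <= 1)%nat ->
  (forall b, 0 <= b -> RInt (fun z => h m z ^ 2 * rho z) (- b) b <= hermite_norm m) /\
  (forall eps, 0 < eps -> exists N, forall b, N <= b ->
     hermite_norm m - eps < RInt (fun z => h m z ^ 2 * rho z) (- b) b).
Proof.
  intros Hm. apply (integral_R_nonneg_bounded _ (1728 * PI)).
  - apply hermite_sq_rho_continuous.
  - intros y; apply hermite_sq_rho_bound, Hm.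
  - intros a b Hab. eapply Rle_trans; [apply Rle_abs|]. apply abs_RInt_le_cauchy; [exact Hab| |].
    + apply hermite_sq_rho_continuous.
    + intros y; destruct (hermite_sq_rho_bound m y Hm); rewrite Rabs_right; lra.
Qed.

Lemma hermite_norm_pos m : (m <= 1)%nat -> 0 < hermite_norm m.
Proof.
  intros Hm. destruct (hermite_norm_approx m Hm) as [Hle _].
  pose proof hermite_sq_rho_continuous m as Hc.
  eapply Rlt_le_trans; [|apply (Hle 2); lra].
  eapply Rlt_le_trans; [|apply (RInt_nonneg_le_wider _ (- 2) 1 2 2); auto; try lra].
  - replace 0 with (RInt (fun _ => 0) 1 2) by (rewrite RInt_const; apply Rmult_0_r).
    apply RInt_lt; [lra | auto | intros; apply (@continuous_const R_UniformSpace R_UniformSpace) |].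
    intros x Hx. pose proof (rho_pos x).
    apply Rmult_lt_0_compat; [|lra].
    destruct m as [|[|m]]; [| |lia]; simpl; nra.
  - intros y; apply hermite_sq_rho_bound, Hm.
Qed.

Lemma in_vartheta_intro chi0 K p gamma A s r : 1 <= A ->
  (forall y, r_e chi0 K p s r y = 0) ->
  (forall y, Rabs (r_minus chi0 K p s r y) < Rpower s (- gamma) * (1 + Rabs y ^ 3)) ->
  Rabs (r_mode chi0 K p s r 0) <= A / Rpower s (2 * beta p + 1) ->
  Rabs (r_mode chi0 K p s r 1) <= A / Rpower s (2 * beta p + 1) ->
  Rabs (r_mode chi0 K p s r 2) < Rpower s (- (4 * beta p - 1)) ->
  in_vartheta chi0 K p gamma A s r.
Proof.
  intros HA He Hm H0 H1 H2.
  assert (HM : A * Rpower s (- (2 * beta p + 1)) = A / Rpower s (2 * beta p + 1))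
    by (rewrite Rpower_Ropp; reflexivity).
  assert (Hsqrt : 1 <= sqrt A) by (rewrite <- sqrt_1; apply sqrt_le_1_alt; lra).
  assert (Heps : 0 < Rpower s (- gamma)) by apply exp_pos.
  assert (Hpow : 0 < Rpower s (- (4 * beta p - 1))) by apply exp_pos.
  split; [|split; [|split; [|split]]]; rewrite ?HM; auto.
  - intros y; rewrite He, Rabs_R0.
    apply Rmult_le_pos; [apply pow2_ge_0 | left; apply exp_pos].
  - intros y. pose proof (proj1 (le_one_plus_abs_cube y)) as Hy.
    apply Rle_trans with (Rpower s (- gamma)); [|nra].
    apply (Rmult_le_reg_r (1 + Rabs y ^ 3)); [lra|].
    unfold Rdiv; rewrite Rmult_assoc, Rinv_l, Rmult_1_r by lra; left; apply Hm.
  - nra.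
Qed.

(* [13824 = 2 * 2 * 3456]: [|d_j| <= 2] and [|cut_moment L 2 j| <= 3456 PI]. *)
Definition mode2_factor : R := 13824 * PI * Rabs (/ hermite_norm 2).

Section Cutoff.

Variable chi0 : R -> R.
Hypothesis chi0_smooth : forall n t, 0 < t -> ex_derive_n chi0 n t.
Hypothesis chi0_range : forall t, 0 <= t -> 0 <= chi0 t <= 1.
Hypothesis chi0_one : forall t, 0 <= t <= 1 -> chi0 t = 1.
Hypothesis chi0_zero : forall t, 2 < t -> chi0 t = 0.

(* [chi chi0 K p y s] is [cut (K * Rpower s (beta p)) y], and [psi] is
   [M (d0 + d1 y) cut L (2 y)] with [L = K * Rpower s0 (beta p)]. *)
Definition cut (L y : R) : R := chi0 (Rabs y / L).

Lemma Derive_chi0_flat t : 0 < t -> t < 1 \/ 2 < t -> Derive chi0 t = 0.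
Proof.
  intros Ht Hflat. apply is_derive_unique.
  destruct Hflat as [Hlt | Hgt].
  - apply (is_derive_ext_loc (fun _ => 1)); [|apply (@is_derive_const R_AbsRing R_NormedModule)].
    assert (He : 0 < Rmin t (1 - t)) by (apply Rmin_pos; lra).
    exists (mkposreal _ He); intros u Hu; change (Rabs (u - t) < Rmin t (1 - t)) in Hu.
    pose proof (Rmin_l t (1 - t)); pose proof (Rmin_r t (1 - t)).
    apply Rabs_lt_between' in Hu. symmetry; apply chi0_one; lra.
  - apply (is_derive_ext_loc (fun _ => 0)); [|apply (@is_derive_const R_AbsRing R_NormedModule)].
    assert (He : 0 < t - 2) by lra.
    exists (mkposreal _ He); intros u Hu; change (Rabs (u - t) < t - 2) in Hu.
    apply Rabs_lt_between' in Hu. symmetry; apply chi0_zero; lra.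
Qed.

Lemma Derive_chi0_bounded : exists B, 0 <= B /\ forall t, 0 < t -> Rabs (Derive chi0 t) <= B.
Proof.
  destruct (continuity_ab_maj (fun t => Rabs (Derive chi0 t)) 1 2) as [x [Hx _]]; [lra| |].
  - intros c Hc. apply continuity_pt_filterlim, (continuous_comp (Derive chi0) Rabs);
      [|apply continuous_Rabs].
    apply (@ex_derive_continuous R_AbsRing R_NormedModule), (chi0_smooth 2); lra.
  - exists (Rabs (Derive chi0 x)); split; [apply Rabs_pos|].
    intros t Ht. destruct (Rle_or_lt 1 t); [destruct (Rle_or_lt t 2)|].
    + apply Hx; lra.
    + rewrite Derive_chi0_flat, Rabs_R0 by lra; apply Rabs_pos.
    + rewrite Derive_chi0_flat, Rabs_R0 by lra; apply Rabs_pos.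
Qed.

Lemma cut_range L y : 0 < L -> 0 <= cut L y <= 1.
Proof. intros HL; apply chi0_range, Rdiv_le_0_compat; [apply Rabs_pos | exact HL]. Qed.

Lemma cut_one L y : 0 < L -> Rabs y <= L -> cut L y = 1.
Proof.
  intros HL Hy; apply chi0_one; split; [apply Rdiv_le_0_compat; [apply Rabs_pos | exact HL]|].
  apply (Rmult_le_reg_r L); [exact HL|]. unfold Rdiv; rewrite Rmult_assoc, Rinv_l; lra.
Qed.

Lemma cut_zero L y : 0 < L -> 2 * L < Rabs y -> cut L y = 0.
Proof.
  intros HL Hy; apply chi0_zero.
  apply (Rmult_lt_reg_r L); [exact HL|]. unfold Rdiv; rewrite Rmult_assoc, Rinv_l; lra.
Qed.

Lemma cut_even L y : cut L (- y) = cut L y.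
Proof. unfold cut; rewrite Rabs_Ropp; reflexivity. Qed.

Lemma cut_is_derive_pos L y : 0 < L -> 0 < y -> is_derive (cut L) y (/ L * Derive chi0 (y / L)).
Proof.
  intros HL Hy.
  apply (is_derive_ext_loc (fun t => chi0 (t / L))).
  - exists (mkposreal _ Hy); intros t Ht; change (Rabs (t - y) < y) in Ht.
    apply Rabs_lt_between' in Ht. unfold cut; rewrite Rabs_right by lra; reflexivity.
  - apply (is_derive_comp chi0 (fun t => t / L)).
    + apply Derive_correct, (chi0_smooth 1), Rdiv_lt_0_compat; lra.
    + auto_derive; [lra | field; lra].
Qed.

Lemma cut_is_derive B L y : 0 <= B -> (forall t, 0 < t -> Rabs (Derive chi0 t) <= B) -> 0 < L ->
  exists d, is_derive (cut L) y d /\ Rabs d <= B / L /\ (2 * L < Rabs y -> d = 0).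
Proof.
  intros HB0 HB HL.
  assert (Hbound : forall t, 0 < t -> Rabs (/ L * Derive chi0 (t / L)) <= B / L
                               /\ (2 * L < t -> / L * Derive chi0 (t / L) = 0)).
  { intros t Ht. assert (Htl : 0 < t / L) by (apply Rdiv_lt_0_compat; lra). split.
    - rewrite Rabs_mult, Rabs_right by (left; apply Rinv_0_lt_compat; lra).
      rewrite Rmult_comm; apply Rmult_le_compat_r; [left; apply Rinv_0_lt_compat; lra | auto].
    - intros Hgt. rewrite Derive_chi0_flat; [ring | exact Htl|].
      right; apply (Rmult_lt_reg_r L); [exact HL|].
      unfold Rdiv; rewrite Rmult_assoc, Rinv_l; lra. }
  destruct (Rtotal_order y 0) as [Hneg | [Hzero | Hpos]].
  - exists (- (/ L * Derive chi0 (- y / L))).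
    destruct (Hbound (- y)) as [Hb Hz]; [lra|].
    split; [|split].
    + apply (is_derive_ext (fun t => cut L (- t))); [intros; apply cut_even|].
      replace (- (/ L * Derive chi0 (- y / L))) with (scal (-1) (/ L * Derive chi0 (- y / L)))
        by (unfold scal; simpl; unfold mult; simpl; ring).
      apply (is_derive_comp (cut L) Ropp); [apply cut_is_derive_pos; lra|].
      auto_derive; auto.
    + rewrite Rabs_Ropp; exact Hb.
    + intros Hy; rewrite Hz by (rewrite <- Rabs_left; auto); apply Ropp_0.
  - subst y. exists 0. split; [|split].
    + apply (is_derive_ext_loc (fun _ => 1)); [|apply (@is_derive_const R_AbsRing R_NormedModule)].
      exists (mkposreal _ HL); intros t Ht; change (Rabs (t - 0) < L) in Ht.
      rewrite Rminus_0_r in Ht. symmetry; apply cut_one; lra.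
    + rewrite Rabs_R0; apply Rdiv_le_0_compat; assumption.
    + reflexivity.
  - exists (/ L * Derive chi0 (y / L)).
    destruct (Hbound y Hpos) as [Hb Hz].
    split; [apply cut_is_derive_pos; lra | split; [exact Hb|]].
    intros Hy; apply Hz; rewrite <- (Rabs_right y); lra.
Qed.

Lemma cut_continuous L y : 0 < L -> continuous (cut L) y.
Proof.
  intros HL. destruct Derive_chi0_bounded as [B [HB0 HB]].
  destruct (cut_is_derive B L y HB0 HB HL) as [d [Hd _]].
  apply (@ex_derive_continuous R_AbsRing R_NormedModule); exists d; exact Hd.
Qed.

Definition cut_moment (L : R) (m j : nat) : R :=
  RInt (fun y => y ^ j * cut L (2 * y) * h m y * rho y) (- L) L.

Lemma cut_moment_integrand_continuous L m j y : 0 < L ->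
  continuous (fun y => y ^ j * cut L (2 * y) * h m y * rho y) y.
Proof.
  intros HL.
  apply (@continuous_mult R_UniformSpace R_AbsRing); [|apply rho_continuous].
  apply (@continuous_mult R_UniformSpace R_AbsRing); [|apply h_continuous].
  apply (@continuous_mult R_UniformSpace R_AbsRing).
  - apply (@ex_derive_continuous R_AbsRing R_NormedModule); auto_derive; auto.
  - apply (continuous_comp (fun y => 2 * y) (cut L)); [|apply cut_continuous; exact HL].
    apply (@ex_derive_continuous R_AbsRing R_NormedModule); auto_derive; auto.
Qed.

Lemma cut_moment_odd L m j : 0 < L -> Nat.odd (m + j) = true -> cut_moment L m j = 0.
Proof.
  intros HL Hodd. apply RInt_sym_odd; [intros; apply cut_moment_integrand_continuous; exact HL|].
  intros y. replace (2 * - y) with (- (2 * y)) by ring.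
  rewrite h_parity, rho_even, cut_even.
  destruct (proj1 (Nat.odd_spec (m + j)) Hodd) as [n Hn].
  assert (Hsign : (-1) ^ m * (-1) ^ j = -1).
  { rewrite <- pow_add, Hn, pow_add, pow_mult. simpl.
    replace (-1 * (-1 * 1)) with 1 by ring. rewrite pow1; ring. }
  replace ((- y) ^ j) with ((-1) ^ j * y ^ j) by (rewrite <- Rpow_mult_distr; f_equal; ring).
  transitivity (((-1) ^ m * (-1) ^ j) * (y ^ j * cut L (2 * y) * h m y * rho y)); [ring|].
  rewrite Hsign; ring.
Qed.

Lemma cut_moment_2_bound L j : 0 < L -> (j <= 1)%nat -> Rabs (cut_moment L 2 j) <= 3456 * PI.
Proof.
  intros HL Hj. apply abs_RInt_le_cauchy; [lra | intros; apply cut_moment_integrand_continuous; exact HL|].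
  intros y. replace (3456 / (1 + y ^ 2)) with (1728 * 2 / (1 + y ^ 2)) by (unfold Rdiv; ring).
  apply Rabs_mul_rho_le.
  destruct (cut_range L (2 * y) HL) as [Hc0 Hc1].
  assert (Hpow : Rabs (y ^ j) <= 1 + y ^ 2).
  { destruct j as [|[|j]]; [| |lia]; simpl; rewrite ?Rmult_1_r, ?Rabs_R1; [nra|].
    apply Rabs_le; split; nra. }
  assert (Hh : Rabs (h 2 y) <= 2 * (1 + y ^ 2)) by (simpl; apply Rabs_le; split; nra).
  rewrite !Rabs_mult, (Rabs_right (cut L (2 * y))) by lra.
  pose proof (Rabs_pos (y ^ j)).
  replace (2 * (1 + y ^ 2) ^ 2) with ((1 + y ^ 2) * (2 * (1 + y ^ 2))) by ring.
  apply Rmult_le_compat; [apply Rmult_le_pos; lra | apply Rabs_pos | nra | exact Hh].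
Qed.

Lemma cut_moment_ratio_eventually m : (m <= 1)%nat ->
  exists N, forall L, N <= L -> 1 <= 2 * (cut_moment L m m / hermite_norm m).
Proof.
  intros Hm. pose proof (hermite_norm_pos m Hm) as HD.
  destruct (proj2 (hermite_norm_approx m Hm) (hermite_norm m / 2)) as [N HN]; [lra|].
  exists (2 * Rmax N 1). intros L HL.
  apply (Rmult_le_reg_r (hermite_norm m)); [exact HD|].
  unfold Rdiv; rewrite Rmult_assoc, Rmult_assoc, Rinv_l, Rmult_1_r, Rmult_1_l by lra.
  pose proof (Rmax_l N 1); pose proof (Rmax_r N 1).
  assert (HL0 : 0 < L) by lra.
  specialize (HN (L / 2) ltac:(lra)).
  enough (RInt (fun z => h m z ^ 2 * rho z) (- (L / 2)) (L / 2) <= cut_moment L m m) by lra.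
  unfold cut_moment.
  rewrite (RInt_ext (fun z => h m z ^ 2 * rho z) (fun y => y ^ m * cut L (2 * y) * h m y * rho y)).
  - apply RInt_nonneg_le_wider; try lra; [intros; apply cut_moment_integrand_continuous; exact HL0|].
    intros y. pose proof (rho_pos y). pose proof (cut_range L (2 * y) HL0).
    replace (y ^ m * cut L (2 * y) * h m y * rho y) with (cut L (2 * y) * (y ^ m * h m y) * rho y) by ring.
    rewrite pow_mul_h_diag by exact Hm.
    apply Rmult_le_pos; [apply Rmult_le_pos; [lra | apply pow2_ge_0] | lra].
  - intros y Hy. rewrite Rmin_left, Rmax_right in Hy by lra.
    rewrite cut_one; [| exact HL0 | apply Rabs_le; split; lra].
    rewrite <- (pow_mul_h_diag m y), Rmult_1_r by exact Hm; reflexivity.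
Qed.

Lemma chi_mul_psi K p A s0 d0 d1 y : 0 < K * Rpower s0 (beta p) ->
  chi chi0 K p y s0 * psi chi0 K p A s0 d0 d1 y = psi chi0 K p A s0 d0 d1 y.
Proof.
  intros HL. change (chi chi0 K p y s0) with (cut (K * Rpower s0 (beta p)) y).
  unfold psi; change (chi chi0 K p (2 * y) s0) with (cut (K * Rpower s0 (beta p)) (2 * y)).
  destruct (Rle_or_lt (Rabs y) (K * Rpower s0 (beta p))) as [Hin | Hout].
  - rewrite cut_one by assumption; ring.
  - rewrite (cut_zero _ (2 * y)) by (try rewrite Rabs_mult, (Rabs_right 2); lra); ring.
Qed.

Lemma r_b_psi K p A s0 d0 d1 : 0 < K * Rpower s0 (beta p) ->
  r_b chi0 K p s0 (psi chi0 K p A s0 d0 d1) = psi chi0 K p A s0 d0 d1.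
Proof. intros HL; apply functional_extensionality; intros y; apply chi_mul_psi, HL. Qed.

Lemma r_e_psi K p A s0 d0 d1 y : 0 < K * Rpower s0 (beta p) ->
  r_e chi0 K p s0 (psi chi0 K p A s0 d0 d1) y = 0.
Proof.
  intros HL; unfold r_e; rewrite Rmult_minus_distr_r, chi_mul_psi by exact HL; ring.
Qed.

Lemma r_mode_psi K p A s0 d0 d1 m : 0 < K * Rpower s0 (beta p) ->
  r_mode chi0 K p s0 (psi chi0 K p A s0 d0 d1) m =
  A / Rpower s0 (2 * beta p + 1) / hermite_norm m *
  (d0 * cut_moment (K * Rpower s0 (beta p)) m 0 + d1 * cut_moment (K * Rpower s0 (beta p)) m 1).
Proof.
  intros HL. set (L := K * Rpower s0 (beta p)) in *.
  set (c := A / Rpower s0 (2 * beta p + 1) / hermite_norm m).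
  set (F := fun j y => y ^ j * cut L (2 * y) * h m y * rho y).
  assert (HF : forall j y, continuous (F j) y) by (intros; apply cut_moment_integrand_continuous, HL).
  unfold r_mode; rewrite r_b_psi by exact HL.
  replace (fun y => psi chi0 K p A s0 d0 d1 y * k m y * rho y)
    with (fun y => c * d0 * F 0%nat y + c * d1 * F 1%nat y).
  - rewrite (integral_R_compact _ L HL).
    + rewrite RInt_lin_comb by (apply ex_RInt_cont; auto).
      unfold cut_moment; fold (F 0%nat) (F 1%nat); ring.
    + intros y; apply continuous_lin_comb; auto.
    + intros y Hy. unfold F. rewrite cut_zero by (try rewrite Rabs_mult, (Rabs_right 2); lra); ring.
  - apply functional_extensionality; intros y.
    unfold F, c, psi, k, hermite_norm; simpl.
    change (chi chi0 K p (2 * y) s0) with (cut L (2 * y)). unfold Rdiv. ring.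
Qed.

Lemma psi_bound K p A s0 d0 d1 y : 0 < K * Rpower s0 (beta p) -> 0 <= A ->
  Rabs d0 <= 2 -> Rabs d1 <= 2 ->
  Rabs (psi chi0 K p A s0 d0 d1 y) <= A / Rpower s0 (2 * beta p + 1) * (2 + 2 * Rabs y).
Proof.
  intros HL HA Hd0 Hd1. unfold psi.
  change (chi chi0 K p (2 * y) s0) with (cut (K * Rpower s0 (beta p)) (2 * y)).
  set (M := A / Rpower s0 (2 * beta p + 1)).
  assert (HM : 0 <= M) by (apply Rdiv_le_0_compat; [exact HA | apply exp_pos]).
  destruct (cut_range (K * Rpower s0 (beta p)) (2 * y) HL) as [Hc0 Hc1].
  assert (Hlin : Rabs (d0 + d1 * y) <= 2 + 2 * Rabs y).
  { eapply Rle_trans; [apply Rabs_triang|]. rewrite Rabs_mult.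
    pose proof (Rabs_pos y); pose proof (Rabs_pos d1); nra. }
  rewrite !Rabs_mult, (Rabs_right M), (Rabs_right (cut _ _)) by lra.
  rewrite Rmult_assoc; apply Rmult_le_compat_l; [exact HM|].
  pose proof (Rabs_pos (d0 + d1 * y)); nra.
Qed.

Lemma psi_derive_bound B K p A s0 d0 d1 y :
  0 <= B -> (forall t, 0 < t -> Rabs (Derive chi0 t) <= B) ->
  1 <= K * Rpower s0 (beta p) -> 0 <= A -> Rabs d0 <= 2 -> Rabs d1 <= 2 ->
  exists dps, is_derive (psi chi0 K p A s0 d0 d1) y dps /\
    Rabs dps <= A / Rpower s0 (2 * beta p + 1) * (2 + 8 * B).
Proof.
  intros HB0 HB HL HA Hd0 Hd1.
  set (L := K * Rpower s0 (beta p)) in *.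
  set (M := A / Rpower s0 (2 * beta p + 1)).
  assert (HM : 0 <= M) by (apply Rdiv_le_0_compat; [exact HA | apply exp_pos]).
  destruct (cut_is_derive B L (2 * y) HB0 HB ltac:(lra)) as [d [Hd [Hdb Hdz]]].
  destruct (cut_range L (2 * y) ltac:(lra)) as [Hc0 Hc1].
  exists (M * d1 * cut L (2 * y) + M * (d0 + d1 * y) * (2 * d)). split.
  - apply (is_derive_ext (fun t => M * (d0 + d1 * t) * cut L (2 * t))); [reflexivity|].
    apply (is_derive_mult (fun t => M * (d0 + d1 * t)) (fun t => cut L (2 * t)));
      [auto_derive; auto; ring | | intros; apply Rmult_comm].
    replace (2 * d) with (scal 2 d) by reflexivity.
    apply (is_derive_comp (cut L) (fun t => 2 * t)); [exact Hd | auto_derive; auto; ring].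
  - assert (Hfar : Rabs (d0 + d1 * y) * (2 * Rabs d) <= 8 * B).
    { destruct (Rle_or_lt (Rabs y) L) as [Hin | Hout].
      + assert (Rabs (d0 + d1 * y) <= 2 + 2 * L).
        { eapply Rle_trans; [apply Rabs_triang|]. rewrite Rabs_mult.
          pose proof (Rabs_pos y); pose proof (Rabs_pos d1); nra. }
        assert (Rabs d * L <= B).
        { apply (Rmult_le_compat_r L) in Hdb; [|lra].
          unfold Rdiv in Hdb; rewrite Rmult_assoc, Rinv_l in Hdb; lra. }
        pose proof (Rabs_pos d); pose proof (Rabs_pos (d0 + d1 * y)); nra.
      + rewrite Hdz, Rabs_R0; [lra|].
        rewrite Rabs_mult, (Rabs_right 2); lra. }
    eapply Rle_trans; [apply Rabs_triang|].
    rewrite !Rabs_mult, (Rabs_right M), (Rabs_right (cut L (2 * y))), (Rabs_right 2) by lra.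
    pose proof (Rabs_pos d1); pose proof (Rabs_pos d); pose proof (Rabs_pos (d0 + d1 * y)).
    assert (Rabs d1 * cut L (2 * y) <= 2) by nra.
    nra.
Qed.

Lemma r_mode_psi_2_bound K p A s0 d0 d1 : 0 < K * Rpower s0 (beta p) -> 0 <= A ->
  Rabs d0 <= 2 -> Rabs d1 <= 2 ->
  Rabs (r_mode chi0 K p s0 (psi chi0 K p A s0 d0 d1) 2) <=
  A / Rpower s0 (2 * beta p + 1) * mode2_factor.
Proof.
  intros HL HA Hd0 Hd1. rewrite r_mode_psi by exact HL.
  set (L := K * Rpower s0 (beta p)) in *.
  set (M := A / Rpower s0 (2 * beta p + 1)).
  assert (HM : 0 <= M) by (apply Rdiv_le_0_compat; [exact HA | apply exp_pos]).
  pose proof (cut_moment_2_bound L 0 HL ltac:(lia)) as H0.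
  pose proof (cut_moment_2_bound L 1 HL ltac:(lia)) as H1.
  assert (Hsum : Rabs (d0 * cut_moment L 2 0 + d1 * cut_moment L 2 1) <= 13824 * PI).
  { eapply Rle_trans; [apply Rabs_triang|]. rewrite !Rabs_mult.
    pose proof (Rabs_pos d0); pose proof (Rabs_pos d1).
    pose proof (Rabs_pos (cut_moment L 2 0)); pose proof (Rabs_pos (cut_moment L 2 1)). nra. }
  unfold mode2_factor, Rdiv. rewrite !Rabs_mult, (Rabs_right M) by lra.
  pose proof (Rabs_pos (/ hermite_norm 2)).
  replace (M * (13824 * PI * Rabs (/ hermite_norm 2)))
    with (M * Rabs (/ hermite_norm 2) * (13824 * PI)) by ring.
  apply Rmult_le_compat_l; [apply Rmult_le_pos; lra | exact Hsum].
Qed.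

Lemma r_minus_psi K p A s0 d0 d1 y : 0 < K * Rpower s0 (beta p) ->
  r_minus chi0 K p s0 (psi chi0 K p A s0 d0 d1) y =
  psi chi0 K p A s0 d0 d1 y
  - (r_mode chi0 K p s0 (psi chi0 K p A s0 d0 d1) 0
     + r_mode chi0 K p s0 (psi chi0 K p A s0 d0 d1) 1 * y
     + r_mode chi0 K p s0 (psi chi0 K p A s0 d0 d1) 2 * (y ^ 2 - 2)).
Proof. intros HL; unfold r_minus; rewrite r_b_psi by exact HL; simpl; ring. Qed.

Lemma r_minus_psi_bound K p A s0 d0 d1 y : 0 < K * Rpower s0 (beta p) -> 0 <= A ->
  Rabs d0 <= 2 -> Rabs d1 <= 2 ->
  Rabs (r_mode chi0 K p s0 (psi chi0 K p A s0 d0 d1) 0) <= A / Rpower s0 (2 * beta p + 1) ->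
  Rabs (r_mode chi0 K p s0 (psi chi0 K p A s0 d0 d1) 1) <= A / Rpower s0 (2 * beta p + 1) ->
  Rabs (r_minus chi0 K p s0 (psi chi0 K p A s0 d0 d1) y) <=
  A / Rpower s0 (2 * beta p + 1) * (6 + 3 * mode2_factor) * (1 + Rabs y ^ 3).
Proof.
  intros HL HA Hd0 Hd1 Hq0 Hq1. rewrite r_minus_psi by exact HL.
  apply quadratic_remainder_bound; auto.
  - apply Rdiv_le_0_compat; [exact HA | apply exp_pos].
  - apply Rmult_le_pos; [pose proof PI_RGT_0; lra | apply Rabs_pos].
  - apply psi_bound; assumption.
  - apply r_mode_psi_2_bound; assumption.
Qed.

Lemma r_minus_psi_derive_bound B K p A s0 d0 d1 y :
  0 <= B -> (forall t, 0 < t -> Rabs (Derive chi0 t) <= B) ->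
  1 <= K * Rpower s0 (beta p) -> 0 <= A -> Rabs d0 <= 2 -> Rabs d1 <= 2 ->
  Rabs (r_mode chi0 K p s0 (psi chi0 K p A s0 d0 d1) 1) <= A / Rpower s0 (2 * beta p + 1) ->
  Rabs (Derive (r_minus chi0 K p s0 (psi chi0 K p A s0 d0 d1)) y) <=
  A / Rpower s0 (2 * beta p + 1) * (2 + 8 * B + 1 + 2 * mode2_factor) * (1 + Rabs y ^ 3).
Proof.
  intros HB0 HB HL HA Hd0 Hd1 Hq1.
  set (q0 := r_mode chi0 K p s0 (psi chi0 K p A s0 d0 d1) 0).
  set (q1 := r_mode chi0 K p s0 (psi chi0 K p A s0 d0 d1) 1) in *.
  set (q2 := r_mode chi0 K p s0 (psi chi0 K p A s0 d0 d1) 2).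
  destruct (psi_derive_bound B K p A s0 d0 d1 y) as [dps [Hd Hdb]]; auto.
  rewrite (is_derive_unique _ _ (dps - (q1 + q2 * (2 * y)))).
  - apply linear_remainder_bound; auto.
    + apply Rdiv_le_0_compat; [exact HA | apply exp_pos].
    + apply Rmult_le_pos; [pose proof PI_RGT_0; lra | apply Rabs_pos].
    + lra.
    + apply r_mode_psi_2_bound; lra.
  - apply (is_derive_ext (fun t => psi chi0 K p A s0 d0 d1 t - (q0 + q1 * t + q2 * (t ^ 2 - 2))));
      [intros t; rewrite r_minus_psi by lra; reflexivity|].
    apply (is_derive_minus (psi chi0 K p A s0 d0 d1)); [exact Hd | auto_derive; auto; ring].
Qed.

Lemma psi_estimates B gamma K p A s0 d0 d1 :
  0 <= B -> (forall t, 0 < t -> Rabs (Derive chi0 t) <= B) ->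
  0 < beta p < 1 -> 3 * beta p < gamma -> 1 < s0 -> 1 <= A -> 1 <= K * Rpower s0 (beta p) ->
  Rabs d0 <= 2 -> Rabs d1 <= 2 ->
  Rabs (r_mode chi0 K p s0 (psi chi0 K p A s0 d0 d1) 0) <= A / Rpower s0 (2 * beta p + 1) ->
  Rabs (r_mode chi0 K p s0 (psi chi0 K p A s0 d0 d1) 1) <= A / Rpower s0 (2 * beta p + 1) ->
  A / Rpower s0 (2 * beta p + 1) * (2 + 8 * B + 3 * mode2_factor + 6) < Rpower s0 (- gamma) ->
  let ps := psi chi0 K p A s0 d0 d1 in
  (forall y, r_e chi0 K p s0 ps y = 0) /\
  (forall y, Rabs (r_minus chi0 K p s0 ps y) < Rpower s0 (- gamma) * (1 + Rabs y ^ 3)) /\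
  Rabs (r_mode chi0 K p s0 ps 0) <= A / Rpower s0 (2 * beta p + 1) /\
  Rabs (r_mode chi0 K p s0 ps 1) <= A / Rpower s0 (2 * beta p + 1) /\
  Rabs (r_mode chi0 K p s0 ps 2) < Rpower s0 (- (4 * beta p - 1)) /\
  in_vartheta chi0 K p gamma A s0 ps /\
  (forall y, Rabs (Derive ps y) <= (2 + 8 * B) * A / Rpower s0 (2 * beta p + 1)) /\
  (2 + 8 * B) * A / Rpower s0 (2 * beta p + 1) <= Rpower s0 (- (gamma - 3 * beta p)) /\
  (forall y, Rabs (Derive (r_minus chi0 K p s0 ps) y) <= Rpower s0 (- gamma) * (1 + Rabs y ^ 3)).
Proof.
  intros HB0 HB Hbeta Hgamma Hs0 HA HL Hd0 Hd1 Hq0 Hq1 Hsmall; cbv zeta.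
  set (M := A / Rpower s0 (2 * beta p + 1)) in *.
  set (E := mode2_factor) in *.
  assert (HM : 0 < M) by (apply Rdiv_lt_0_compat; [lra | apply exp_pos]).
  assert (HE : 0 <= E) by (apply Rmult_le_pos; [pose proof PI_RGT_0; lra | apply Rabs_pos]).
  assert (Hpow_gamma : Rpower s0 (- gamma) <= Rpower s0 (- (gamma - 3 * beta p))) by (apply Rle_Rpower; lra).
  assert (HCM : (2 + 8 * B) * A / Rpower s0 (2 * beta p + 1) = M * (2 + 8 * B)) by (unfold M, Rdiv; ring).
  assert (Hcube : forall y, 1 <= 1 + Rabs y ^ 3) by (intros y; apply le_one_plus_abs_cube).
  assert (Hminus : forall y, Rabs (r_minus chi0 K p s0 (psi chi0 K p A s0 d0 d1) y)
                             < Rpower s0 (- gamma) * (1 + Rabs y ^ 3)).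
  { intros y. eapply Rle_lt_trans; [apply r_minus_psi_bound; [lra | lra | exact Hd0 | exact Hd1 | exact Hq0 | exact Hq1]|].
    apply Rmult_lt_compat_r; [specialize (Hcube y); lra | fold M E; nra]. }
  assert (Hq2 : Rabs (r_mode chi0 K p s0 (psi chi0 K p A s0 d0 d1) 2) < Rpower s0 (- (4 * beta p - 1))).
  { eapply Rle_lt_trans; [apply r_mode_psi_2_bound; first [assumption | lra]|].
    apply Rlt_le_trans with (Rpower s0 (- gamma)); [fold M E; nra | apply Rle_Rpower; lra]. }
  split; [intros y; apply r_e_psi; lra|].
  split; [exact Hminus|]. split; [exact Hq0|]. split; [exact Hq1|]. split; [exact Hq2|].
  split; [apply in_vartheta_intro; [exact HA | intros y; apply r_e_psi; lra | exact Hminus | exact Hq0 | exact Hq1 | exact Hq2]|].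
  split.
  { intros y. destruct (psi_derive_bound B K p A s0 d0 d1 y) as [dps [Hd Hdb]]; auto; try lra.
    rewrite HCM, (is_derive_unique _ _ _ Hd); exact Hdb. }
  split; [rewrite HCM; nra|].
  intros y. eapply Rle_trans; [apply (r_minus_psi_derive_bound B); auto; lra|].
  apply Rmult_le_compat_r; [specialize (Hcube y); lra | fold M E; nra].
Qed.

Lemma r_mode_psi_0 K p A s0 d0 d1 : 0 < K * Rpower s0 (beta p) ->
  r_mode chi0 K p s0 (psi chi0 K p A s0 d0 d1) 0 =
  A / Rpower s0 (2 * beta p + 1) * (cut_moment (K * Rpower s0 (beta p)) 0 0 / hermite_norm 0) * d0.
Proof.
  intros HL; rewrite r_mode_psi, (cut_moment_odd _ 0 1) by (exact HL || reflexivity).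
  unfold Rdiv; ring.
Qed.

Lemma r_mode_psi_1 K p A s0 d0 d1 : 0 < K * Rpower s0 (beta p) ->
  r_mode chi0 K p s0 (psi chi0 K p A s0 d0 d1) 1 =
  A / Rpower s0 (2 * beta p + 1) * (cut_moment (K * Rpower s0 (beta p)) 1 1 / hermite_norm 1) * d1.
Proof.
  intros HL; rewrite r_mode_psi, (cut_moment_odd _ 1 0) by (exact HL || reflexivity).
  unfold Rdiv; ring.
Qed.

End Cutoff.

Lemma beta_bounds p : 3 < p -> 0 < beta p < 1.
Proof.
  intros Hp; unfold beta; split; [apply Rdiv_lt_0_compat; lra|].
  apply (Rmult_lt_reg_r (2 * (p - 1))); [lra|].
  unfold Rdiv; rewrite Rmult_assoc, Rinv_l; lra.
Qed.

Theorem proposition4p4 :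
  forall (p mu K : R) (chi0 : R -> R),
    3 < p -> 0 < mu -> 6 <= K ->
    (forall n t, 0 < t -> ex_derive_n chi0 n t) ->
    (forall t, 0 <= t -> 0 <= chi0 t <= 1) ->
    (forall t1 t2, 0 <= t1 -> t1 <= t2 -> chi0 t2 <= chi0 t1) ->
    (forall t, 0 <= t <= 1 -> chi0 t = 1) ->
    (forall t, 2 < t -> chi0 t = 0) ->
  exists C : R, 0 < C /\
  forall gamma : R,
    3 * beta p < gamma -> gamma < Rmin (5 * beta p - 1) (2 * beta p + 1) ->
  forall A : R, 1 <= A ->
  exists s03 : R, 1 < s03 /\
  forall s0 : R, s03 <= s0 ->
  let M := A / Rpower s0 (2 * beta p + 1) in
  let Ph := Phi chi0 K p A s0 in
  exists a0 b0 a1 b1 : R,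
    -2 <= a0 <= b0 /\ b0 <= 2 /\ -2 <= a1 <= b1 /\ b1 <= 2 /\
    (* (i) *)
    (forall d, in_rect a0 b0 a1 b1 d -> in_rect (-M) M (-M) M (Ph d)) /\
    (forall x, in_rect (-M) M (-M) M x ->
       exists d, in_rect a0 b0 a1 b1 d /\ Ph d = x) /\
    (forall d d', in_rect a0 b0 a1 b1 d -> in_rect a0 b0 a1 b1 d' ->
       Ph d = Ph d' -> d = d') /\
    (forall d, on_rect_boundary a0 b0 a1 b1 d ->
       on_rect_boundary (-M) M (-M) M (Ph d)) /\
    0 < linear2_det Ph /\
    (forall d0 d1, in_rect a0 b0 a1 b1 (d0, d1) ->
      let ps := psi chi0 K p A s0 d0 d1 in
      (* (ii) *)
      (forall y, r_e chi0 K p s0 ps y = 0) /\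
      (forall y, Rabs (r_minus chi0 K p s0 ps y)
                   < Rpower s0 (- gamma) * (1 + Rabs y ^ 3)) /\
      Rabs (r_mode chi0 K p s0 ps 0) <= M /\
      Rabs (r_mode chi0 K p s0 ps 1) <= M /\
      Rabs (r_mode chi0 K p s0 ps 2) < Rpower s0 (- (4 * beta p - 1)) /\
      in_vartheta chi0 K p gamma A s0 ps /\
      (* (iii) *)
      (forall y, Rabs (Derive ps y) <= C * A / Rpower s0 (2 * beta p + 1)) /\
      C * A / Rpower s0 (2 * beta p + 1) <= Rpower s0 (- (gamma - 3 * beta p)) /\
      (forall y, Rabs (Derive (r_minus chi0 K p s0 ps) y)
                   <= Rpower s0 (- gamma) * (1 + Rabs y ^ 3))).
Proof.
  intros p mu K chi0 Hp _ HK Hsmooth Hrange _ Hone Hzero.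
  destruct (Derive_chi0_bounded chi0 Hsmooth Hone Hzero) as [B [HB0 HB]].
  exists (2 + 8 * B); split; [lra|].
  intros gamma Hg1 Hg2 A HA.
  pose proof (beta_bounds p Hp) as Hbeta.
  pose proof (Rmin_r (5 * beta p - 1) (2 * beta p + 1)) as Hg3.
  destruct (cut_moment_ratio_eventually chi0 Hsmooth Hrange Hone Hzero 0 (Nat.le_0_l 1)) as [N0 HN0].
  destruct (cut_moment_ratio_eventually chi0 Hsmooth Hrange Hone Hzero 1 (le_n 1)) as [N1 HN1].
  destruct (p_infty_witness (fun s => Rmax 1 (Rmax N0 N1) < Rpower s (beta p) /\
      A * (2 + 8 * B + 3 * mode2_factor + 6) < Rpower s (2 * beta p + 1 - gamma)))
    as [s03 [Hs03 Hlarge]]; [apply filter_and; apply Rpower_eventually_gt; lra|].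
  exists s03; split; [exact Hs03|]. intros s0 Hs0 M Ph.
  destruct (Hlarge s0 Hs0) as [HL HM].
  pose proof (Rmax_l 1 (Rmax N0 N1)); pose proof (Rmax_r 1 (Rmax N0 N1)).
  pose proof (Rmax_l N0 N1); pose proof (Rmax_r N0 N1).
  assert (HMpos : 0 < M) by (apply Rdiv_lt_0_compat; [lra | apply exp_pos]).
  set (L := K * Rpower s0 (beta p)).
  assert (HLmax : Rmax 1 (Rmax N0 N1) <= L) by (unfold L; nra).
  assert (HL1 : 1 <= L /\ N0 <= L /\ N1 <= L) by (repeat split; lra).
  assert (HL0 : 0 < L) by lra.
  set (al0 := cut_moment chi0 L 0 0 / hermite_norm 0).
  set (al1 := cut_moment chi0 L 1 1 / hermite_norm 1).
  destruct (diagonal_map_rect_onto_square Ph M al0 al1 2 HMpos Rlt_0_2 (HN0 L (proj1 (proj2 HL1)))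
    (HN1 L (proj2 (proj2 HL1))))
    as (Hb0 & Hb1 & Hb2 & Hb3 & Himg & Honto & Hinj & Hbd & Hdet).
  { intros [d0 d1]; unfold Ph, Phi; simpl.
    rewrite r_mode_psi_0, r_mode_psi_1 by assumption; reflexivity. }
  exists (- / al0), (/ al0), (- / al1), (/ al1); repeat (split; [assumption|]).
  intros d0 d1 Hin. destruct (Himg _ Hin) as [Hq0 Hq1]. destruct Hin as [Hd0 Hd1]; simpl in *.
  apply psi_estimates; try first [assumption | lra]; [exact (proj1 HL1) | ..].
  - apply Rabs_le; split; lra.
  - apply Rabs_le; split; lra.
  - apply Rabs_le; exact Hq0.
  - apply Rabs_le; exact Hq1.
  - apply div_Rpower_mul_lt; exact HM.
Qed.
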